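(* Let $M$ be a non-compact finite-dimensional smooth manifold and $E\neq\{0\}$ a locally convex space. Then $C^\infty_{vS}(M,E)$, with the vector space structure given by pointwise operations, is not a topological vector space.
   Context: Conventions: finite-dimensional manifolds are smooth, Hausdorff and $\sigma$-compact. Locally convex spaces are real Hausdorff locally convex topological vector spaces; differentiability is in the sense of Bastiani (Keller $C^r$-theory): for $U\subseteq E$ open and $f\colon U\to F$, $d^{(k)}f(x;y_1,\dots,y_k)=D_{y_k}\cdots D_{y_1}f(x)$ is the iterated directional derivative, and $f$ is smooth if all these exist and are continuous on $U\times E^k$ (and $f$ is continuous); manifolds modeled on locally convex spaces and smooth maps between them are defined via charts with smooth transition maps. Let $M$ be a finite-dimensional manifold of dimension $m$ and $e_1,\dots,e_m$ the standard basis of $\mathbb{R}^m$. For a locally convex space $E$, a continuous seminorm $p$ on $E$, an open $W\subseteq\mathbb{R}^m$, a smooth $g\colon W\to E$, a compact $A\subseteq W$ and $r\in\mathbb{N}_0$ put $\|g\|(r,A,p)=\sup\{p(d^{(k)}g(a;\alpha)) : a\in A,\ \alpha\in\{e_1,\dots,e_m\}^k,\ 0\le k\le r\}$ (for $E=\mathbb{R}^n$ one takes $p=\|\cdot\|_\infty$ and writes $\|g\|(r,A)$). For a manifold $X$ modeled on $E$, $f\in C^\infty(M,X)$, a chart $(U,\phi)$ of $M$, a compact $A\subseteq U$, a chart $(V,\psi)$ of $X$ with $f(A)\subseteq V$, a continuous seminorm $p$ on $E$, $r\in\mathbb{N}_0$ and $\epsilon>0$, the elementary neighborhood is $\mathcal{N}^r(f;A,(U,\phi),(V,\psi),p,\epsilon)=\{h\in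 C^\infty(M,X): h(A)\subseteq V,\ \|\psi\circ h\circ\phi^{-1}-\psi\circ f\circ\phi^{-1}\|(r,\phi(A),p)<\epsilon\}$. A basic neighborhood of $f$ is an intersection $\bigcap_{i\in\Lambda}\mathcal{N}^{r_i}(f;A_i,(U_i,\phi_i),(V_i,\psi_i),p_i,\epsilon_i)$ of elementary neighborhoods of $f$ such that the family $\{A_i\}_{i\in\Lambda}$ is locally finite in $M$. The very strong topology on $C^\infty(M,X)$ is the topology with the basic neighborhoods (of all $f$) as a basis; $C^\infty_{vS}(M,X)$ denotes $C^\infty(M,X)$ with this topology. When source or target is a vector space, its identity chart is used and omitted from the notation. *)

From mathcomp Require Import all_boot all_algebra all_classical all_reals all_analysis.
Import numFieldNormedType.Exports.
Set Implicit Arguments.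
Unset Strict Implicit.
Unset Printing Implicit Defensive.
Import GRing.Theory Num.Theory.
Local Open Scope classical_set_scope.
Local Open Scope ring_scope.

Section Bastiani.
Variables (R : realType) (m : nat).

Definition dquot (W : tvsType R) (g : 'rV[R]_m -> W) (x v : 'rV[R]_m) : R -> W :=
  fun t => t^-1 *: (g (x + t *: v) - g x).

Definition dirder (W : tvsType R) (g : 'rV[R]_m -> W) (x v : 'rV[R]_m) : W :=
  xget 0 [set l : W | dquot g x v @ (0 : R)^' --> l].

(* iterated directional derivative:
   iterd g [:: y1; ...; yk] x = d^(k) g (x; y1, ..., yk) = D_yk ... D_y1 g (x) *)
Definition iterd (W : tvsType R) (g : 'rV[R]_m -> W) (ys : seq 'rV[R]_m) :
    'rV[R]_m -> W :=
  foldl (fun h y => fun x => dirder h x y) g ys.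

(* the rows y_1, ..., y_k of a k x m matrix, i.e. an element of (R^m)^k *)
Definition rows (k : nat) (Y : 'M[R]_(k, m)) : seq 'rV[R]_m :=
  [seq row i Y | i <- enum 'I_k].

Definition bastiani_smooth (W : tvsType R) (U : set 'rV[R]_m) (g : 'rV[R]_m -> W) :=
  [/\ open U,
      (forall (ys : seq 'rV[R]_m) (y x : 'rV[R]_m), U x ->
         exists l : W, dquot (iterd g ys) x y @ (0 : R)^' --> l) &
      (forall k : nat,
         {within U `*` [set: 'M[R]_(k, m)],
            continuous (fun z : 'rV[R]_m * 'M[R]_(k, m) => iterd g (rows z.2) z.1)})].

Definition vS_seminorm (W : tvsType R) (r : nat) (A : set 'rV[R]_m) (p : W -> R)
    (g : 'rV[R]_m -> W) : R :=
  sup [set z : R | exists (a : 'rV[R]_m) (alpha : seq 'rV[R]_m),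
         [/\ A a, (size alpha <= r)%N,
             all (fun y => y \in [seq 'e_i | i <- enum 'I_m]) alpha &
             z = p (iterd g alpha a)]].

End Bastiani.

Definition continuous_seminorm (R : realType) (E : tvsType R) (p : E -> R) :=
  [/\ continuous p,
      (forall x y : E, p (x + y) <= p x + p y) &
      (forall (a : R) (x : E), p (a *: x) = `|a| * p x)].

Record chart (R : realType) (M : topologicalType) (m : nat) := Chart {
  cdom : set M;
  cmap : M -> 'rV[R]_m;
  cinv : 'rV[R]_m -> M }.

Section Manifolds.
Variables (R : realType) (M : topologicalType) (m : nat).

Definition is_chart (c : chart R M m) :=
  [/\ open (cdom c) /\ open (cmap c @` cdom c),
      (forall x, cdom c x -> cinv c (cmap c x) = x),
      (forall y, (cmap c @` cdom c) y -> cdom c (cinv c y) /\ cmap c (cinv c y) = y),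
      {within cdom c, continuous (cmap c)} &
      {within cmap c @` cdom c, continuous (cinv c)}].

Definition compatible (c1 c2 : chart R M m) :=
  bastiani_smooth (cmap c1 @` (cdom c1 `&` cdom c2)) (cmap c2 \o cinv c1) /\
  bastiani_smooth (cmap c2 @` (cdom c1 `&` cdom c2)) (cmap c1 \o cinv c2).

Definition smooth_manifold (atlas : set (chart R M m)) :=
  [/\ hausdorff_space M,
      (exists K : nat -> set M, (forall n, compact (K n)) /\ \bigcup_n K n = [set: M]),
      (forall c, atlas c -> is_chart c),
      (forall x : M, exists2 c, atlas c & cdom c x) &
      (forall c1 c2, atlas c1 -> atlas c2 -> compatible c1 c2)].

(* charts of the smooth manifold (i.e. of the maximal atlas) *)
Definition manifold_chart (atlas : set (chart R M m)) (c : chart R M m) :=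
  is_chart c /\ forall c', atlas c' -> compatible c c'.

Variable (E : tvsType R).

Definition smooth_map (atlas : set (chart R M m)) (f : M -> E) :=
  forall c, atlas c -> bastiani_smooth (cmap c @` cdom c) (f \o cinv c).

(* elementary neighbourhood N^r(f; A, (U, phi), p, eps) (target chart = identity) *)
Definition elem_nbhd (atlas : set (chart R M m)) (f : M -> E) (r : nat) (A : set M)
    (c : chart R M m) (p : E -> R) (eps : R) : set (M -> E) :=
  [set h | smooth_map atlas h /\
     vS_seminorm r (cmap c @` A) p
        (fun y => h (cinv c y) - f (cinv c y)) < eps].

Definition locally_finite (I : Type) (A : I -> set M) :=
  forall x : M, exists V, nbhs x V /\ finite_set [set i | A i `&` V !=set0].

Definition basic_nbhd (atlas : set (chart R M m)) (f : M -> E) (B : set (M -> E)) :=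
  exists (I : Type) (r : I -> nat) (A : I -> set M) (c : I -> chart R M m)
         (p : I -> E -> R) (eps : I -> R),
    [/\ forall i, [/\ manifold_chart atlas (c i), compact (A i), A i `<=` cdom (c i),
                      continuous_seminorm (p i) & 0 < eps i],
        locally_finite A &
        B = [set h | smooth_map atlas h /\
                     forall i, elem_nbhd atlas f (r i) (A i) (c i) (p i) (eps i) h]].

Definition vS_open (atlas : set (chart R M m)) (O : set (M -> E)) :=
  O `<=` smooth_map atlas /\
  forall f, O f -> exists g B, [/\ smooth_map atlas g, basic_nbhd atlas g B, B f & B `<=` O].

Definition vS_is_tvs (atlas : set (chart R M m)) :=
  (forall O f g, vS_open atlas O -> smooth_map atlas f -> smooth_map atlas g ->
     O (fun x => f x + g x) ->
     exists U V, [/\ vS_open atlas U, vS_open atlas V, U f, V g &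
       forall f' g', U f' -> V g' -> O (fun x => f' x + g' x)]) /\
  (forall O (a : R) f, vS_open atlas O -> smooth_map atlas f ->
     O (fun x => a *: f x) ->
     exists (S : set R) V, [/\ open S, S a, vS_open atlas V, V f &
       forall b h, S b -> V h -> O (fun x => b *: h x)]).

End Manifolds.

From mathcomp Require Import all_boot all_algebra all_classical all_reals all_analysis.
From mathcomp Require Import all_order finmap ring lra.
From HB Require Import structures.
Import numFieldNormedType.Exports.
Import Order.TTheory GRing.Theory Num.Theory.
Local Open Scope classical_set_scope.
Local Open Scope ring_scope.
Set Implicit Arguments.
Unset Strict Implicit.

(* The Minkowski gauge of a symmetric convex neighbourhood of 0 missing x0 is a
   continuous seminorm p with 1 <= p x0.  Non-compactness and sigma-compactness
   give a sequence (x n) escaping to infinity, i.e. a locally finite family of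
   points, so the smooth maps h with p (h (x n)) < 1 / (n + 1) for all n form a
   very strong neighbourhood of 0.  If scalar multiplication were continuous at
   (0, x0), the constant map b x0 would lie in it for some b > 0, i.e.
   b <= p (b x0) < 1 / (n + 1) for every n, which is absurd. *)

Lemma nbhs0_gt0 (R : realType) (S : set R) : nbhs 0 S -> exists2 b, 0 < b & S b.
Proof.
move=> /nbhs_ballP[e e_gt0 eS]; exists (e / 2); first by rewrite divr_gt0.
apply: eS; rewrite /ball /= sub0r normrN ger0_norm ?divr_ge0 ?ltW //.
by rewrite ltr_pdivrMr // ltr_pMr // ltr1n.
Qed.

Lemma nbhs0_absorbing (R : realType) (E : tvsType R) (D : set E) :
  nbhs 0 D -> forall x : E, exists2 t : R, 0 < t & D (t^-1 *: x).
Proof.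
move=> nbhs0D x; have /= := scale_continuous ((0 : R^o), x) D.
rewrite scale0r => /(_ nbhs0D) [[B1 B2] [nbhs0B1 nbhsxB2] B12D].
have [b b_gt0 B1b] := nbhs0_gt0 nbhs0B1.
exists b^-1; rewrite ?invr_gt0 ?invrK //.
by apply: (B12D (b, x)); split=> //; exact: nbhs_singleton nbhsxB2.
Qed.

Section Gauge.
Variables (R : realType) (E : tvsType R) (D : set E).
Hypothesis DN : forall x, D x -> D (- x).
Hypothesis convD :
  forall x y l, D x -> D y -> 0 <= l -> l <= 1 -> D (l *: x + (1 - l) *: y).
Hypothesis nbhs0D : nbhs 0 D.

Definition gauge (x : E) : R := inf [set t : R | 0 < t /\ D (t^-1 *: x)].

Let gauge_set_neq0 x : [set t : R | 0 < t /\ D (t^-1 *: x)] !=set0.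
Proof. by have [t t_gt0 Dt] := nbhs0_absorbing nbhs0D x; exists t. Qed.

Lemma gauge_le x t : 0 < t -> D (t^-1 *: x) -> gauge x <= t.
Proof.
move=> t_gt0 Dt; apply: ge_inf => //.
by exists 0 => s [s_gt0 _]; exact: ltW.
Qed.

Lemma le_gauge x c : (forall t, 0 < t -> D (t^-1 *: x) -> c <= t) -> c <= gauge x.
Proof.
by move=> lb; apply: lb_le_inf (gauge_set_neq0 x) _ => t []; exact: lb.
Qed.

Lemma gauge0 : gauge 0 = 0.
Proof.
apply/eqP; rewrite eq_le le_gauge ?andbT; last by move=> t /ltW.
apply/unstable.ler_gtP => e e_gt0; apply: gauge_le; rewrite // scaler0.
exact: nbhs_singleton.
Qed.

Lemma gaugeZ a x : gauge (a *: x) = `|a| * gauge x.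
Proof.
have [->|a_neq0] := eqVneq a 0; first by rewrite scale0r gauge0 normr0 mul0r.
suff gaugeZ_le b y : b != 0 -> gauge (b *: y) <= `|b| * gauge y.
  apply/eqP; rewrite eq_le gaugeZ_le //= -ler_pdivlMl ?normr_gt0 //.
  have := @gaugeZ_le a^-1 (a *: x); rewrite invr_eq0 scalerA mulVf // scale1r.
  by rewrite normrV ?unitfE //; apply.
move=> b_neq0; have b_gt0 : 0 < `|b| by rewrite normr_gt0.
rewrite -ler_pdivrMl //; apply: le_gauge => t t_gt0 Dt.
rewrite ler_pdivrMl //; apply: gauge_le; first exact: mulr_gt0.
have -> : (`|b| * t)^-1 *: (b *: y) = (b / `|b|) *: (t^-1 *: y).
  rewrite !scalerA; congr (_ *: _).
  by field; rewrite (gt_eqF t_gt0) (gt_eqF b_gt0).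
case: (ltrgtP b 0) => [b_lt0|b_gt0'|/eqP]; last by rewrite (negPf b_neq0).
- by rewrite ltr0_norm // invrN mulrN divff // scaleN1r; exact: DN.
- by rewrite gtr0_norm // divff ?gt_eqF // scale1r.
Qed.

Lemma gaugeN x : gauge (- x) = gauge x.
Proof. by rewrite -scaleN1r gaugeZ normrN normr1 mul1r. Qed.

Lemma gaugeD x y : gauge (x + y) <= gauge x + gauge y.
Proof.
suff gaugeD_le s t : 0 < s -> D (s^-1 *: x) -> 0 < t -> D (t^-1 *: y) ->
    gauge (x + y) <= s + t.
  rewrite -lerBlDr; apply: le_gauge => t t_gt0 Dt.
  rewrite lerBlDr (addrC t) -lerBlDr; apply: le_gauge => s s_gt0 Ds.
  by rewrite lerBlDr (addrC s); apply: gaugeD_le.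
move=> s_gt0 Ds t_gt0 Dt; have st_gt0 : 0 < s + t by exact: addr_gt0.
apply: gauge_le => //.
(* [(s + t)^-1 (x + y)] is the convex combination of [s^-1 x] and [t^-1 y]
   with weights [s / (s + t)] and [t / (s + t)]. *)
have := convD Ds Dt (divr_ge0 (ltW s_gt0) (ltW st_gt0)).
rewrite ler_pdivrMr // mul1r lerDl (ltW t_gt0) => /(_ isT).
have -> : 1 - s / (s + t) = t / (s + t) by field; rewrite (gt_eqF st_gt0).
rewrite !scalerA scalerDr; congr (D (_ *: _ + _ *: _)); field.
  by rewrite (gt_eqF s_gt0) (gt_eqF st_gt0).
by rewrite (gt_eqF t_gt0) (gt_eqF st_gt0).
Qed.

Lemma continuous_gauge : continuous gauge.
Proof.
move=> y; apply/cvgrPdist_le => e e_gt0.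
apply: filterS (nbhsT y (nbhs0Z (lt0r_neq0 e_gt0) nbhs0D)).
move=> _ [_ [d Dd <-] <-] /=.
have ed_le : gauge (e *: d) <= e.
  rewrite gaugeZ gtr0_norm // -[leRHS]mulr1 ler_pM2l //.
  by apply: gauge_le => //; rewrite invr1 scale1r.
have := gaugeD y (e *: d); have := gaugeD (y + e *: d) (- (e *: d)).
rewrite addrK gaugeN => ? ?; rewrite ler_norml; apply/andP; split; lra.
Qed.

Lemma gauge_continuous_seminorm : continuous_seminorm gauge.
Proof. by split; [exact: continuous_gauge|exact: gaugeD|exact: gaugeZ]. Qed.

End Gauge.

Lemma seminorm0 (R : realType) (E : tvsType R) (p : E -> R) :
  continuous_seminorm p -> p 0 = 0.
Proof. by case=> _ _ pZ; rewrite -(scale0r (0 : E)) pZ normr0 mul0r. Qed.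

Lemma exists_continuous_seminorm_ge1 (R : realType) (E : tvsType R) (x0 : E) :
  hausdorff_space E -> x0 != 0 ->
  exists p : E -> R, continuous_seminorm p /\ 1 <= p x0.
Proof.
move=> HE x0_neq0.
have [A [nbhs0A notAx0]] : exists A : set E, nbhs 0 A /\ ~ A x0.
  apply: contrapT => noA; move: x0_neq0; rewrite eq_sym => /eqP; apply.
  apply: HE => A B nbhs0A nbhsx0B; apply: contrapT => AB0; apply: noA.
  exists (~` B); split.
    by apply: filterS nbhs0A => z Az Bz; apply: AB0; exists z.
  by apply; exact: nbhs_singleton.
have [Bs Bs_convex [Bs_open Bs_basis]] := @locally_convex R E.
have [C [BsC C0] CA] := Bs_basis 0 A nbhs0A.
have nbhs0C : nbhs (0 : E) C.
  by apply: open_nbhs_nbhs; split => //; exact: Bs_open.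
have convC x y l : C x -> C y -> 0 <= l -> l <= 1 -> C (l *: x + (1 - l) *: y).
  move=> Cx Cy l_ge0 l_le1.
  have := Bs_convex C (mem_set BsC) x y (Itv01 l_ge0 l_le1).
  by move=> /(_ (mem_set Cx) (mem_set Cy)) /set_mem.
pose D := [set x : E | C x /\ C (- x)].
have DN x : D x -> D (- x) by case=> Cx CNx; split; rewrite ?opprK.
have convD x y l : D x -> D y -> 0 <= l -> l <= 1 -> D (l *: x + (1 - l) *: y).
  move=> [Cx CNx] [Cy CNy] l_ge0 l_le1; split; first exact: convC.
  by rewrite opprD -!scalerN; exact: convC.
have nbhs0D : nbhs (0 : E) D.
  apply: filterI => //.
  by apply: filterS (nbhs0N nbhs0C) => _ [x Cx <-]; rewrite opprK.
exists (gauge D); split; first exact: gauge_continuous_seminorm.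
(* For [t < 1], [x0 = t (x0 / t) + (1 - t) 0] would lie in [D], hence in [A]. *)
apply: le_gauge => // t t_gt0 Dt; rewrite leNgt; apply/negP => t_lt1.
apply: notAx0; apply: CA.
have [] := convD _ _ t Dt (nbhs_singleton nbhs0D) (ltW t_gt0) (ltW t_lt1).
by rewrite scaler0 addr0 scalerA divff ?gt_eqF // scale1r.
Qed.

(* [compact_cover] is stated for pointed spaces; a point of [T] makes [T]
   pointed through an alias. *)
Definition pointed_at (T : topologicalType) (t0 : T) : Type := T.
HB.instance Definition _ (T : topologicalType) (t0 : T) :=
  Topological.on (pointed_at t0).
HB.instance Definition _ (T : topologicalType) (t0 : T) :=
  isPointed.Build (pointed_at t0) t0.

Lemma compact_coverE (T : topologicalType) : compact = @cover_compact T.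
Proof.
have [[t0 _]|T0] := pselect (exists t : T, True).
  exact: (@compact_cover (pointed_at t0)).
apply/funext => A; have -> : A = set0.
  by apply/seteqP; split => // t; have := T0; apply: contra_notP; exists t.
apply/propext; split=> [_ I D f _ _|_]; [by exists fset0 | exact: compact0].
Qed.

Lemma exists_locally_finite_seq (T : topologicalType) (K : nat -> set T) :
  (forall n, compact (K n)) -> \bigcup_n K n = [set: T] -> ~ compact [set: T] ->
  exists x : nat -> T, locally_finite (fun n => [set x n]).
Proof.
move=> cK UK; rewrite compact_coverE => /existsNP[I /existsNP[D /existsNP[f]]].
move=> /not_implyP[f_open /not_implyP[f_cov no_subcover]].
have finite_cover n :
    exists F : {fset I}, {subset F <= D} /\ K n `<=` cover [set` F] f.
  have := cK n; rewrite compact_coverE.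
  by move=> /(_ I D f f_open (fun y _ => f_cov y Logic.I))[F FD KF]; exists F.
have [F F_sub] := choice finite_cover.
pose G n := (\bigcup_(j <- iota 0 n.+1) F j)%fset.
have uncovered n : exists y, ~ cover [set` G n] f y.
  apply: contrapT => Gcov; apply: no_subcover.
  exists (G n) => [i /bigfcupP[j _]|y _]; first exact: (proj1 (F_sub j)).
  by apply: contrapT => Gy; apply: Gcov; exists y.
have [x x_notin] := choice uncovered.
exists x => y; have : (\bigcup_n K n) y by rewrite UK.
case=> j _ /(proj2 (F_sub j))[i Fji fiy]; exists (f i); split.
  apply: open_nbhs_nbhs; split => //; apply: f_open.
  by rewrite -in_setE; exact: (proj1 (F_sub j)).
apply: sub_finite_set (finite_II j) => n /= [_ [-> fixn]].
rewrite ltnNge; apply/negP => jn; apply: (x_notin n); exists i => //.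
change (i \in G n); apply/(@bigfcupP _ _ _ _ F xpredT); exists j => //.
by rewrite mem_iota add0n ltnS jn.
Qed.

Section ConstantMaps.
Variables (R : realType) (m : nat) (W : tvsType R).

Lemma dquot_cst (c : W) (x v : 'rV[R]_m) : dquot (fun _ => c) x v = fun _ => 0.
Proof. by apply: funext => t; rewrite /dquot subrr scaler0. Qed.

Hypothesis HW : hausdorff_space W.

Lemma dirder_cst (c : W) (x v : 'rV[R]_m) : dirder (fun _ => c) x v = 0.
Proof.
rewrite /dirder dquot_cst; case: xgetP => [l _ l_lim|]; last first.
  by move=> /(_ 0) []; exact: cvg_cst.
by apply: (cvg_unique HW l_lim); exact: cvg_cst.
Qed.

Lemma iterd_cst (c : W) (ys : seq 'rV[R]_m) :
  iterd (fun _ => c) ys = fun _ => if ys is [::] then c else 0.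
Proof.
elim: ys c => [//|y ys IH] c; rewrite /iterd /=.
have -> : (fun x => dirder (fun _ => c) x y) = fun _ => 0.
  by apply: funext => x; rewrite dirder_cst.
by have := IH 0; rewrite /iterd => ->; case: ys {IH}.
Qed.

Lemma bastiani_smooth_cst (U : set 'rV[R]_m) (c : W) :
  open U -> bastiani_smooth U (fun _ => c).
Proof.
move=> U_open; split => // [ys y x _|k].
  by exists 0; rewrite iterd_cst dquot_cst; exact: cvg_cst.
apply: continuous_subspaceT.
have -> : (fun z : 'rV[R]_m * 'M[R]_(k, m) => iterd (fun _ => c) (rows z.2) z.1)
    = fun _ => if k is 0%N then c else 0.
  apply: funext => z; rewrite iterd_cst.
  have : size (rows z.2) = k by rewrite /rows size_map size_enum_ord.
  by case: (rows z.2) => [<-|? ? <-].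
by move=> z; exact: cvg_cst.
Qed.

End ConstantMaps.

Lemma smooth_map_cst (R : realType) (M : topologicalType) (m : nat)
    (atlas : set (chart R M m)) (E : tvsType R) (c : E) :
  (forall c, atlas c -> is_chart c) -> hausdorff_space E ->
  smooth_map atlas (fun _ => c).
Proof.
move=> atlas_charts HE ch /atlas_charts[[_ ?] _ _ _ _].
exact: bastiani_smooth_cst.
Qed.

Lemma vS_seminorm0_set1 (R : realType) (m : nat) (W : tvsType R) (a : 'rV[R]_m)
    (p : W -> R) (g : 'rV[R]_m -> W) :
  vS_seminorm 0 [set a] p g = p (g a).
Proof.
rewrite /vS_seminorm; set S := [set _ | _].
suff -> : S = [set p (g a)] by exact: sup1.
apply/seteqP; split => [z [a' [[|y al] [-> // _ ->]]] //|z ->].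
by exists a, [::].
Qed.

Section PointwiseNbhd.
Variables (R : realType) (M : topologicalType) (m : nat).
Variables (atlas : set (chart R M m)) (E : tvsType R).
Variables (x : nat -> M) (cs : nat -> chart R M m) (p : E -> R) (eps : nat -> R).

Definition pointwise_nbhd0 : set (M -> E) :=
  [set h | smooth_map atlas h /\
     forall i, elem_nbhd atlas (fun _ => 0) 0 [set x i] (cs i) p (eps i) h].

Lemma pointwise_nbhd0_cst (c : E) : smooth_map atlas (fun _ => c) ->
  pointwise_nbhd0 (fun _ => c) <-> forall i, p c < eps i.
Proof.
move=> c_smooth; rewrite /pointwise_nbhd0 /elem_nbhd /=.
split=> [[_ c_nbhd] i|p_lt]; last first.
  by split=> // i; rewrite image_set1 vS_seminorm0_set1 subr0.
by have [_] := c_nbhd i; rewrite image_set1 vS_seminorm0_set1 subr0.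
Qed.

Lemma vS_open_pointwise_nbhd0 :
  smooth_manifold atlas -> hausdorff_space E ->
  locally_finite (fun n => [set x n]) ->
  (forall i, atlas (cs i) /\ cdom (cs i) (x i)) ->
  continuous_seminorm p -> (forall i, 0 < eps i) ->
  vS_open atlas pointwise_nbhd0.
Proof.
move=> [_ _ atlas_charts _ atlas_compat] HE x_lf cs_x p_semi eps_gt0.
have zero_smooth := smooth_map_cst 0 atlas_charts HE.
split=> [h []//|h h_nbhd]; exists (fun _ => 0), pointwise_nbhd0; split => //.
exists nat, (fun _ => 0%N), (fun i => [set x i]), cs, (fun _ => p), eps.
split => // i; have [atlas_csi csi_xi] := cs_x i; split => //.
- by split; [exact: atlas_charts|move=> c' atlas_c'; exact: atlas_compat].
- exact: compact_set1.
- by move=> _ ->.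
Qed.

End PointwiseNbhd.

Unset Implicit Arguments.

Theorem corollary3p2 (R : realType) (M : topologicalType) (m : nat)
  (atlas : set (chart R M m)) (E : tvsType R) :
  smooth_manifold atlas -> ~ compact [set: M] ->
  hausdorff_space E -> (exists x : E, x != 0) ->
  ~ vS_is_tvs E atlas.
Proof.
move=> Matlas ncM HE [x0 x0_neq0] [_ scale_cont].
have [p [p_semi p_x0]] := exists_continuous_seminorm_ge1 HE x0_neq0.
have [_ [K [cK UK]] atlas_charts atlas_cover _] := Matlas.
have [x x_lf] := exists_locally_finite_seq cK UK ncM.
have chart_at i : exists c, atlas c /\ cdom c (x i).
  by have [c] := atlas_cover (x i); exists c.
have [cs cs_x] := choice chart_at.
pose eps (i : nat) : R := i.+1%:R^-1.
have eps_gt0 i : 0 < eps i by rewrite invr_gt0.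
have cst_smooth (c : E) := smooth_map_cst c atlas_charts HE.
pose O := pointwise_nbhd0 atlas x cs p eps.
have O_open : vS_open atlas O by exact: vS_open_pointwise_nbhd0.
have O0 : O (fun _ => 0 *: x0).
  by apply/pointwise_nbhd0_cst => // i; rewrite scale0r seminorm0.
have [S [V [S_open S0 _ Vx0 SV_O]]] := scale_cont O 0 _ O_open (cst_smooth x0) O0.
have [b b_gt0 Sb] := nbhs0_gt0 (open_nbhs_nbhs (conj S_open S0)).
have /pointwise_nbhd0_cst pbx0_lt := SV_O b _ Sb Vx0.
have [k] := ltr_add_invr b_gt0; rewrite add0r; apply/negP; rewrite -leNgt.
apply: le_trans (ltW (pbx0_lt (cst_smooth _) k)).
by case: p_semi => _ _ ->; rewrite gtr0_norm // ler_peMr // ltW.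
Qed.
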